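(* There is an absolute constant $C>0$ such that for every power $q$ of an odd prime, every $d\ge 2$, and every $A\subset\mathbb{F}_q^d$ with $|A|\ge C q^{\frac{d+2}{3}}$, there exist $x,y,z\in A$ such that $(x,y,z)$ forms a right angle.
   Context: For $u,v\in\mathbb{F}_q^d$, $u\cdot v=\sum_{i=1}^d u_iv_i$. An ordered triple $(x,y,z)\in(\mathbb{F}_q^d)^3$ forms a right angle if $x,y,z$ are pairwise distinct and $(x-y)\cdot(z-y)=0$. *)

From HB Require Import structures.
From mathcomp Require Import all_boot all_order all_algebra all_field.
Set Implicit Arguments. Unset Strict Implicit. Unset Printing Implicit Defensive.
Import Order.TTheory GRing.Theory Num.Theory.
Local Open Scope ring_scope.

Definition dotp (F : fieldType) (d : nat) (u v : 'rV[F]_d) : F :=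
  \sum_(i < d) u 0 i * v 0 i.

Definition right_angle (F : fieldType) (d : nat) (x y z : 'rV[F]_d) : bool :=
  [&& x != y, y != z, x != z & dotp (x - y) (z - y) == 0].

(* If A contains no right angle, then for every ordered pair p = (x, y) of
   distinct points of A the hyperplane H_p through y orthogonal to x - y meets
   A only in {x, y}.  Count incidences between points of F_q^d and the
   hyperplanes H_p: every point lies on |P| / q of them on average, and since
   two hyperplanes with non-parallel normals meet in q^(d-2) points (coinciding
   hyperplanes are rare, at most 2q per p), the incidence function has variance
   O(q^2 q^d |P|).  Points of A, however, lie on at most 2|P| / |A| hyperplanes
   on average, far below the mean once |A| >> q; Cauchy-Schwarz over A then
   forces |A|^3 = O(q^(d+2)). *)

From HB Require Import structures.
From mathcomp Require Import all_boot all_order all_algebra all_field.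
From mathcomp Require Import ring lra.
Import Order.TTheory GRing.Theory Num.Theory.
Local Open Scope ring_scope.
Set Implicit Arguments. Unset Strict Implicit. Unset Printing Implicit Defensive.

Section DotProduct.
Variables (F : fieldType) (d : nat).
Implicit Types (n u v w : 'rV[F]_d).

Lemma dotpDr n u v : dotp n (u + v) = dotp n u + dotp n v.
Proof. by rewrite /dotp -big_split; apply: eq_bigr => i _; rewrite mxE mulrDr. Qed.

Lemma dotpZr n a v : dotp n (a *: v) = a * dotp n v.
Proof. by rewrite /dotp mulr_sumr; apply: eq_bigr => i _; rewrite mxE mulrCA. Qed.

Lemma dotpBr n u v : dotp n (u - v) = dotp n u - dotp n v.
Proof. by rewrite -scaleN1r dotpDr dotpZr mulN1r. Qed.

Lemma dotpZl a n v : dotp (a *: n) v = a * dotp n v.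
Proof. by rewrite /dotp mulr_sumr; apply: eq_bigr => i _; rewrite mxE mulrA. Qed.

Lemma dotp_delta n i : dotp n (delta_mx 0 i) = n 0 i.
Proof.
rewrite /dotp (bigD1 i) //= big1 ?addr0 => [|j /negbTE ji]; first by rewrite mxE !eqxx mulr1.
by rewrite mxE ji andbF mulr0.
Qed.

Lemma row_neq0P n : n != 0 -> exists i, n 0 i != 0.
Proof.
move=> nz; apply/existsP; apply: contraNT nz => /existsPn n0.
by apply/eqP/rowP => i; rewrite mxE; apply/eqP/negbNE/n0.
Qed.

Lemma dotp_neq0 n : n != 0 -> exists w, dotp n w != 0.
Proof. by move=> /row_neq0P[i ni]; exists (delta_mx 0 i); rewrite dotp_delta. Qed.

(* Test the hypothesis on [n_i e_j - n_j e_i], where [n_i != 0]. *)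
Lemma dotp_ker_sub n n' : n != 0 ->
  (forall w, dotp n w = 0 -> dotp n' w = 0) -> exists l, n' = l *: n.
Proof.
move=> /row_neq0P[i ni] ker_sub; exists (n' 0 i / n 0 i).
apply/rowP => j; rewrite mxE.
have := ker_sub (n 0 i *: delta_mx 0 j - n 0 j *: delta_mx 0 i).
rewrite !dotpBr !dotpZr !dotp_delta mulrC subrr => /(_ erefl) /eqP.
rewrite subr_eq0 => /eqP nij.
by apply: (mulfI ni); rewrite nij; field.
Qed.

End DotProduct.

Section Hyperplanes.
Variables (F : finFieldType) (d : nat).
Implicit Types (n w : 'rV[F]_d) (c : F).

(* [z |-> z + (c / phi w) w] maps the zero fiber onto the fiber of [c]. *)
Lemma card_linear_fiber (K : {set 'rV[F]_d}) (phi : 'rV[F]_d -> F) w c :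
  (forall a u v, u \in K -> v \in K -> u + a *: v \in K) ->
  (forall a u v, phi (u + a *: v) = phi u + a * phi v) ->
  w \in K -> phi w != 0 ->
  (#|[set z in K | phi z == c]| * #|F|)%N = #|K|.
Proof.
move=> K_lin phi_lin wK phiw.
have fiber_eq c' : #|[set z in K | phi z == c']| = #|[set z in K | phi z == 0]|.
  set t := c' / phi w.
  have -> : [set z in K | phi z == c'] = [set z + t *: w | z in [set z in K | phi z == 0]].
    apply/setP => z; rewrite inE; apply/andP/imsetP => [[zK /eqP phiz]|[v]].
      exists (z + (- t) *: w); last by rewrite -addrA -scalerDl addNr scale0r addr0.
      by rewrite inE K_lin //= phi_lin phiz mulNr divfK ?subrr.
    by rewrite inE => /andP[vK /eqP phiv] ->; rewrite K_lin // phi_lin phiv add0r divfK.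
  by rewrite card_imset //; apply: addIr.
have -> : #|K| = (\sum_(c' : F) #|[set z in K | phi z == c']|)%N.
  rewrite -sum1_card (partition_big phi xpredT) //=; apply: eq_bigr => c' _.
  by rewrite -sum1_card; apply: eq_bigl => z; rewrite inE.
by rewrite (eq_bigr _ (fun c' _ => fiber_eq c')) sum_nat_const fiber_eq cardT mulnC.
Qed.

Definition hyperplane n c := [set z | dotp n z == c].

Lemma card_hyperplane n c : n != 0 -> (#|hyperplane n c| * #|F|)%N = (#|F| ^ d)%N.
Proof.
move=> /dotp_neq0[w nw].
have lin a u v : dotp n (u + a *: v) = dotp n u + a * dotp n v.
  by rewrite dotpDr dotpZr.
have := card_linear_fiber c (fun _ _ _ _ _ => in_setT _) lin (in_setT w) nw.
rewrite cardsT card_mx mul1n => <-.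
by congr (_ * _)%N; apply: eq_card => z; rewrite !inE.
Qed.

Lemma card_hyperplaneI n n' c c' : n != 0 -> (forall l, n' != l *: n) ->
  (#|hyperplane n c :&: hyperplane n' c'| * #|F| * #|F| <= #|F| ^ d)%N.
Proof.
move=> nz not_par; set K0 := hyperplane n 0; set K1 := [set z in K0 | dotp n' z == 0].
have [w /andP[wK0 n'w]] : exists w, (w \in K0) && (dotp n' w != 0).
  apply/existsP; apply: contraT => /existsPn ker_sub.
  have [l n'E] : exists l, n' = l *: n.
    apply: dotp_ker_sub nz _ => v nv; apply/eqP.
    by move: (ker_sub v); rewrite inE nv eqxx negbK.
  by move/eqP: n'E; rewrite (negbTE (not_par l)).
have card_K1 : (#|K1| * #|F|)%N = #|K0|.
  apply: (card_linear_fiber (phi := dotp n') 0 _ _ wK0 n'w) => [a u v|a u v].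
    by rewrite !inE dotpDr dotpZr => /eqP-> /eqP->; rewrite mulr0 addr0.
  by rewrite dotpDr dotpZr.
have le_K1 : (#|hyperplane n c :&: hyperplane n' c'| <= #|K1|)%N.
  have [->|[z0 z0H]] := set_0Vmem (hyperplane n c :&: hyperplane n' c').
    by rewrite cards0.
  rewrite -(card_imset _ (addIr (- z0))); apply/subset_leq_card/subsetP => _ /imsetP[z zH ->].
  move: zH z0H; rewrite !inE => /andP[/eqP nz1 /eqP n'z1] /andP[/eqP nz0 /eqP n'z0].
  by rewrite !dotpBr nz1 nz0 n'z1 n'z0 !subrr !eqxx.
rewrite -(card_hyperplane 0 nz) -/K0 -card_K1.
by rewrite !leq_mul2r le_K1 !orbT.
Qed.

End Hyperplanes.

Lemma sum_card_incident (I J : finType) (P : {set I}) (B : I -> {set J}) (C : {set J}) :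
  (\sum_(j in C) #|[set i in P | j \in B i]| = \sum_(i in P) #|C :&: B i|)%N.
Proof.
under eq_bigr do rewrite -sum1dep_card.
rewrite (exchange_big_dep (mem P)) /= => [|j i _ /andP[] //].
apply: eq_bigr => i iP; rewrite sum1dep_card.
by apply: eq_card => j; rewrite !inE iP.
Qed.

Lemma sum_card_incident_sqr (I J : finType) (P : {set I}) (B : I -> {set J}) :
  (\sum_j #|[set i in P | j \in B i]| ^ 2 = \sum_(i in P) \sum_(i' in P) #|B i :&: B i'|)%N.
Proof.
have sqrE j : (#|[set i in P | j \in B i]| ^ 2 =
    #|[set k in setX P P | j \in B k.1 :&: B k.2]|)%N.
  rewrite expnS expn1 -cardsX; apply: eq_card => -[i i'].
  by rewrite !inE andbACA.
rewrite (eq_bigr _ (fun j _ => sqrE j)) -(eq_bigl _ _ (@in_setT J)).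
rewrite (sum_card_incident (setX P P) (fun k => B k.1 :&: B k.2)) pair_big /=.
by apply: eq_big => [[i i']|k _]; rewrite ?inE ?setTI.
Qed.

Lemma cauchy_schwarz_sum (R : realDomainType) (I : finType) (A : {set I}) (f : I -> R) :
  (\sum_(i in A) f i) ^+ 2 <= #|A|%:R * \sum_(i in A) f i ^+ 2.
Proof.
set S := \sum_(i in A) f i; set k : R := #|A|%:R.
have [A0|Apos] := posnP #|A|.
  by rewrite /S (eq_bigl _ _ (card0_eq A0)) big_pred0_eq expr2 mulr0 /k A0 mul0r.
have var_ge0 : 0 <= \sum_(i in A) (k * f i - S) ^+ 2 by apply: sumr_ge0 => i _; apply: sqr_ge0.
have varE : \sum_(i in A) (k * f i - S) ^+ 2 = k * (k * \sum_(i in A) f i ^+ 2 - S ^+ 2).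
  rewrite (eq_bigr (fun i => k ^+ 2 * f i ^+ 2 - 2 * k * S * f i + S ^+ 2)) => [|i _]; last by ring.
  rewrite !big_split /= sumrN -!mulr_sumr sumr_const -/S -/k -mulr_natr; ring.
by move: var_ge0; rewrite varE pmulr_rge0 ?ltr0n // subr_ge0.
Qed.

Section RightAngles.
Variables (F : finFieldType) (d : nat).
Implicit Types (A : {set 'rV[F]_d}) (p : 'rV[F]_d * 'rV[F]_d).

Definition right_hyperplane p := hyperplane (p.1 - p.2) (dotp (p.1 - p.2) p.2).

Lemma in_right_hyperplane p z :
  (z \in right_hyperplane p) = (dotp (p.1 - p.2) (z - p.2) == 0).
Proof. by rewrite inE dotpBr subr_eq0. Qed.

Definition dpairs A := [set p | [&& p.1 \in A, p.2 \in A & p.1 != p.2]].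

Definition right_angle_free A :=
  forall x y z, x \in A -> y \in A -> z \in A -> ~~ right_angle x y z.

Lemma card_dpairs A : (#|A| ^ 2 <= #|dpairs A| + #|A|)%N.
Proof.
rewrite expnS expn1 -cardsX.
apply: (@leq_trans #|dpairs A :|: [set (x, x) | x in A]|).
  apply/subset_leq_card/subsetP => -[x y]; rewrite !inE /= => /andP[xA yA].
  have [<-|ne] := eqVneq x y; last by rewrite xA yA.
  by apply/orP; right; apply/imsetP; exists x.
by apply: (leq_trans (leq_card_setU _ _)); rewrite leq_add2l leq_imset_card.
Qed.

Lemma card_right_hyperplane_free A p : right_angle_free A -> p \in dpairs A ->
  (#|A :&: right_hyperplane p| <= 2)%N.
Proof.
move=> free; rewrite inE => /and3P[xA yA ne].
apply: (@leq_trans #|[set p.1; p.2]|); last by rewrite cards2 ne.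
apply/subset_leq_card/subsetP => z; rewrite in_setI in_right_hyperplane !inE => /andP[zA zH].
apply/negPn/negP; rewrite negb_or => /andP[n1 n2].
by move: (free _ _ _ xA yA zA); rewrite /right_angle ne eq_sym n2 eq_sym n1 zH.
Qed.

(* Every [p' \in dpairs A] whose hyperplane meets [right_hyperplane p] with a
   parallel normal (hence coincides with it) lies in this set. *)
Definition parallel_dpairs A p :=
  [set p' | (p'.2 \in A :&: right_hyperplane p) &&
            [exists l, p'.1 - p'.2 == l *: (p.1 - p.2)]].

Lemma card_parallel_dpairs A p :
  (#|parallel_dpairs A p| <= #|A :&: right_hyperplane p| * #|F|)%N.
Proof.
rewrite -cardsT -cardsX.
apply: (leq_trans _ (leq_imset_card (fun u => (u.1 + u.2 *: (p.1 - p.2), u.1)) _)).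
apply/subset_leq_card/subsetP => -[y' x']; rewrite inE /= => /andP[y'H /existsP[l /eqP par]].
by apply/imsetP; exists (x', l); rewrite ?in_setX ?y'H ?in_setT //= -par addrC subrK.
Qed.

Lemma card_right_hyperplaneI A p p' : p \in dpairs A -> p' \in dpairs A ->
  (#|right_hyperplane p :&: right_hyperplane p'| * #|F| * #|F|
     <= #|F| ^ d + #|F| ^ d * #|F| * (p' \in parallel_dpairs A p))%N.
Proof.
rewrite 2![_ \in dpairs A]inE => /and3P[_ _ ne] /and3P[_ y'A ne'].
have n_neq0 : p.1 - p.2 != 0 by rewrite subr_eq0.
have [l /eqP par|not_par] := pickP (fun l => p'.1 - p'.2 == l *: (p.1 - p.2)); last first.
  apply: leq_trans (leq_addr _ _); apply: card_hyperplaneI n_neq0 _ => l.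
  by rewrite not_par.
have [->|[w]] := set_0Vmem (right_hyperplane p :&: right_hyperplane p').
  by rewrite cards0.
move=> /setIP[nw n'w]; rewrite !inE in nw n'w; move/eqP: nw => nw; move/eqP: n'w => n'w.
have l_neq0 : l != 0.
  by apply: contraNneq ne' => l0; rewrite -subr_eq0 par l0 scale0r.
have -> : p' \in parallel_dpairs A p.
  rewrite !inE y'A /=; apply/andP; split; last by apply/existsP; exists l; rewrite par.
  by move: n'w; rewrite par !dotpZl => /(mulfI l_neq0) <-; rewrite nw.
rewrite muln1 (leq_trans _ (leq_addl _ _)) //.
rewrite -(card_hyperplane (dotp (p.1 - p.2) p.2) n_neq0) !leq_mul2r.
by rewrite subset_leq_card ?orbT // subsetIl.
Qed.

End RightAngles.

Section Incidences.
Variables (F : finFieldType) (d : nat) (A : {set 'rV[F]_d}).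

Definition incidence z := #|[set p in dpairs A | z \in right_hyperplane p]|.

Lemma sum_incidence : (\sum_z incidence z * #|F| = #|dpairs A| * #|F| ^ d)%N.
Proof.
rewrite -big_distrl -(eq_bigl _ _ (@in_setT _)) sum_card_incident big_distrl.
rewrite -sum_nat_const; apply: eq_bigr => p; rewrite inE setTI => /and3P[_ _ ne].
by apply: card_hyperplane; rewrite subr_eq0.
Qed.

Hypothesis free : right_angle_free A.

Lemma sum_incidence_free : (\sum_(z in A) incidence z <= 2 * #|dpairs A|)%N.
Proof.
rewrite sum_card_incident mulnC -sum_nat_const; apply: leq_sum => p.
exact: card_right_hyperplane_free.
Qed.

Lemma sum_incidence_sqr_free :
  (\sum_z incidence z ^ 2 * #|F| ^ 2
     <= #|dpairs A| ^ 2 * #|F| ^ d + 2 * #|dpairs A| * (#|F| ^ 2 * #|F| ^ d))%N.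
Proof.
rewrite -big_distrl sum_card_incident_sqr big_distrl /=.
have row_bound p : p \in dpairs A ->
    (\sum_(p' in dpairs A) #|right_hyperplane p :&: right_hyperplane p'| * #|F| ^ 2
       <= #|dpairs A| * #|F| ^ d + 2 * (#|F| ^ 2 * #|F| ^ d))%N.
  move=> pA; have in_parallel_le : (\sum_(p' in dpairs A) (p' \in parallel_dpairs A p)
      <= #|parallel_dpairs A p|)%N.
    rewrite -sum1_card big_mkcond [X in (_ <= X)%N]big_mkcond; apply: leq_sum => p' _.
    by case: (_ \in dpairs A); case: (_ \in parallel_dpairs A p).
  under eq_bigr do rewrite expnS expn1 mulnA.
  apply: leq_trans (leq_sum _ (fun p' p'A => card_right_hyperplaneI pA p'A)) _.
  rewrite big_split sum_nat_const -big_distrr leq_add2l /= -!expnSr.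
  apply: leq_trans (leq_mul (leqnn _) (leq_trans in_parallel_le (card_parallel_dpairs A p))) _.
  by rewrite mulnCA -expnSr -expnD add2n leq_mul2r (card_right_hyperplane_free free pA) orbT.
under eq_bigr do rewrite big_distrl.
apply: leq_trans (leq_sum _ row_bound) _.
by rewrite sum_nat_const; apply: eq_leq; ring.
Qed.

Lemma sum_deviation_sqr_free (R : realFieldType) :
  \sum_z (#|F|%:R * (incidence z)%:R - #|dpairs A|%:R) ^+ 2
    <= 2 * #|F|%:R ^+ 2 * (#|F| ^ d)%:R * #|dpairs A|%:R :> R.
Proof.
set q : R := #|F|%:R; set P : R := #|dpairs A|%:R; set Q : R := (#|F| ^ d)%:R.
have sum_h : q * \sum_z (incidence z)%:R = P * Q.
  by rewrite mulrC -natr_sum -natrM big_distrl sum_incidence natrM.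
have sum_h2 : q ^+ 2 * \sum_z (incidence z)%:R ^+ 2 <= P ^+ 2 * Q + 2 * P * q ^+ 2 * Q.
  have := sum_incidence_sqr_free; rewrite -(ler_nat R) -big_distrl.
  rewrite (natrD R) !(natrM R) -/Q natr_sum (eq_bigr _ (fun z _ => natrX R _ _)) -/q -/P.
  by rewrite !expr2 mulrC -[2 * P * (q * q) * Q]mulrA.
rewrite (eq_bigr (fun z => q ^+ 2 * (incidence z)%:R ^+ 2
    - 2 * P * (q * (incidence z)%:R) + P ^+ 2)) => [|z _]; last by ring.
rewrite !big_split /= sumrN sumr_const card_mx mul1n -[P ^+ 2 *+ _]mulr_natr -/Q.
rewrite -!mulr_sumr sum_h.
by move: sum_h2; set S := \sum_z _ ^+ 2; lra.
Qed.

(* Cauchy-Schwarz over [A] for [z |-> q * incidence z - |dpairs A|]: its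
   square sum over all of [F^d] is small, while its sum over [A] is very
   negative because each [A :&: right_hyperplane p] has at most two points. *)
Lemma right_angle_free_energy (R : realFieldType) : (2 * #|F| <= #|A|)%N ->
  ((#|A|%:R - 2 * #|F|%:R) * #|dpairs A|%:R) ^+ 2
    <= 2 * #|A|%:R * #|F|%:R ^+ 2 * (#|F| ^ d)%:R * #|dpairs A|%:R :> R.
Proof.
move=> le_2q_a; set q : R := #|F|%:R; set a : R := #|A|%:R; set P : R := #|dpairs A|%:R.
pose G z := q * (incidence z)%:R - P.
have sumAG : \sum_(z in A) G z <= - ((a - 2 * q) * P).
  have le_2P : \sum_(z in A) (incidence z)%:R <= 2 * P :> R.
    by rewrite -natr_sum -natrM ler_nat sum_incidence_free.
  have := ler_wpM2l (ler0n _ #|F|) le_2P; rewrite -/q.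
  by rewrite sumrB -mulr_sumr sumr_const -[P *+ _]mulr_natr -/a; lra.
have sumAG2 : \sum_(z in A) G z ^+ 2 <= \sum_z G z ^+ 2.
  by rewrite [X in _ <= X](bigID (mem A)) /= lerDl sumr_ge0 // => z _; apply: sqr_ge0.
have X_ge0 : 0 <= (a - 2 * q) * P.
  by rewrite mulr_ge0 ?ler0n // subr_ge0 -natrM ler_nat.
apply: le_trans (le_trans (cauchy_schwarz_sum A G) _).
  by move: sumAG; set s := \sum_(z in A) _; nra.
apply: le_trans (ler_wpM2l (ler0n _ #|A|) (le_trans sumAG2 (sum_deviation_sqr_free R))) _.
by rewrite -/a !mulrA [a * 2]mulrC.
Qed.

End Incidences.

Lemma right_angle_free_card (F : finFieldType) d (A : {set 'rV[F]_d}) :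
  (0 < d)%N -> right_angle_free A -> (#|A| ^ 3 < 64 * #|F| ^ d.+2)%N.
Proof.
move=> d_gt0 free; rewrite ltnNge; apply/negP => large.
set q : rat := #|F|%:R; set a : rat := #|A|%:R; set P : rat := #|dpairs A|%:R.
set Q : rat := (#|F| ^ d)%:R.
have q_ge2 : 2 <= q by rewrite (ler_nat _ 2) card_finNzRing_gt1.
have q_le_Q : q <= Q.
  by rewrite ler_nat -{1}(expn1 #|F|) leq_pexp2l // ltnW // card_finNzRing_gt1.
have a_large : 64 * q ^+ 2 * Q <= a ^+ 3.
  by move: large; rewrite -(addn2 d) expnD -(ler_nat rat) 2!natrM -/Q !natrX -/q -/a; lra.
have a_ge_4q : 4 * q <= a.
  rewrite leNgt; apply/negP => a_lt_4q.
  have q3_le : q ^+ 3 <= q ^+ 2 * Q by rewrite exprSr ler_wpM2l ?exprn_ge0 //; lra.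
  have : a ^+ 3 < (4 * q) ^+ 3 by rewrite ltrXn2r // ?nnegrE ?ler0n //; lra.
  nra.
have P_ge : a ^+ 2 - a <= P.
  by have := card_dpairs A; rewrite -(ler_nat rat) natrD natrX -/a -/P; lra.
have le_2q_a : (2 * #|F| <= #|A|)%N by rewrite -(ler_nat rat) natrM -/q -/a; lra.
have := right_angle_free_energy free rat le_2q_a; rewrite -/a -/q -/P -/Q => energy.
have P_pos : 0 < P by nra.
have sq_ge : a ^+ 2 / 4 <= (a - 2 * q) ^+ 2 by nra.
have aP_le : a * P <= 8 * q ^+ 2 * Q.
  rewrite -(ler_pM2l (_ : 0 < a * P / 4)); last by nra.
  apply: le_trans (_ : (a - 2 * q) ^+ 2 * P * P <= _); first by nra.
  by move: energy; rewrite exprMn; nra.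
nra.
Qed.

Theorem corollary2p3 :
  exists C : rat, 0 < C /\
    forall (F : finFieldType), odd #|F| ->
    forall (d : nat), (2 <= d)%N ->
    forall (A : {set 'rV[F]_d}),
      C ^+ 3 * ((#|F| ^ (d + 2))%N)%:R <= (#|A|%:R) ^+ 3 ->
      exists x y z, [/\ x \in A, y \in A, z \in A & right_angle x y z].
Proof.
exists 4; split => // F _ d d_ge2 A large.
have [/existsP[x /existsP[y /existsP[z /and4P[xA yA zA xyz]]]]|no_right] :=
  boolP [exists x, exists y, exists z, [&& x \in A, y \in A, z \in A & right_angle x y z]].
  by exists x, y, z.
have free : right_angle_free A.
  move=> x y z xA yA zA; apply: contraNN no_right => xyz.
  by apply/existsP; exists x; apply/existsP; exists y; apply/existsP; exists z; rewrite xA yA zA.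
have := right_angle_free_card (ltnW d_ge2) free.
rewrite ltnNge -(addn2 d) -(ler_nat rat) natrM [in X in _ <= X]natrX => /negP[].
by move: large; lra.
Qed.
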